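(* The logic $\mathsf{HLC}^\flat=\mathsf{ICK}\oplus(p\mathrel{\Box\!\!\!\rightarrow} p)\oplus(((p\mathrel{\Box\!\!\!\rightarrow} q)\wedge(q\mathrel{\Box\!\!\!\rightarrow} r))\to(p\mathrel{\Box\!\!\!\rightarrow} r))$ is sound and complete with respect to the class of conditional frames $(X,\leq,\mathcal{R})$ satisfying, for all $x\in X$ and upsets $a,b$: $R_a[x]\subseteq a$, and $R_a[x]\subseteq b$ implies $R_a[x]\subseteq{\uparrow}R_b[x]$.
   Context: Formulas: $\phi ::= p\mid\bot\mid\phi\wedge\phi\mid\phi\vee\phi\mid\phi\to\phi\mid\phi\mathrel{\Box\!\!\!\rightarrow}\phi$. $\mathsf{ICK}\oplus\Gamma$ is the smallest set containing intuitionistic propositional logic, $\Gamma$, $(p\mathrel{\Box\!\!\!\rightarrow}(q\wedge r))\leftrightarrow((p\mathrel{\Box\!\!\!\rightarrow} q)\wedge(p\mathrel{\Box\!\!\!\rightarrow} r))$ and $(p\mathrel{\Box\!\!\!\rightarrow}\top)\leftrightarrow\top$, closed under uniform substitution, modus ponens and congruence rules for both arguments of $\mathrel{\Box\!\!\!\rightarrow}$. A conditional frame is $(X,\leq,\mathcal{R})$, $(X,\leq)$ a nonempty preorder, $\mathcal{R}=\{R_a\mid a\text{ an upset}\}$ with $(\leq\circ R_a)\subseteq(R_a\circ\leq)$; valuations assign upsets to letters and $x\models\phi\mathrel{\Box\!\!\!\rightarrow}\psi$ iff every $y$ with $xR_{V(\phi)}y$ satisfies $\psi$. *)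

Set Implicit Arguments.

Inductive form : Type :=
| Var : nat -> form
| Bot : form
| And : form -> form -> form
| Or : form -> form -> form
| Imp : form -> form -> form
| Cond : form -> form -> form.

Definition Top : form := Imp Bot Bot.
Definition Iff (a b : form) : form := And (Imp a b) (Imp b a).

Fixpoint subst (s : nat -> form) (f : form) : form :=
  match f with
  | Var n => s n
  | Bot => Bot
  | And a b => And (subst s a) (subst s b)
  | Or a b => Or (subst s a) (subst s b)
  | Imp a b => Imp (subst s a) (subst s b)
  | Cond a b => Cond (subst s a) (subst s b)
  end.

Inductive ipc_axiom : form -> Prop :=
| ax_K : forall a b, ipc_axiom (Imp a (Imp b a))
| ax_S : forall a b c,
    ipc_axiom (Imp (Imp a (Imp b c)) (Imp (Imp a b) (Imp a c)))
| ax_andE1 : forall a b, ipc_axiom (Imp (And a b) a)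
| ax_andE2 : forall a b, ipc_axiom (Imp (And a b) b)
| ax_andI : forall a b, ipc_axiom (Imp a (Imp b (And a b)))
| ax_orI1 : forall a b, ipc_axiom (Imp a (Or a b))
| ax_orI2 : forall a b, ipc_axiom (Imp b (Or a b))
| ax_orE : forall a b c,
    ipc_axiom (Imp (Imp a c) (Imp (Imp b c) (Imp (Or a b) c)))
| ax_efq : forall a, ipc_axiom (Imp Bot a).

Definition p0 := Var 0.
Definition q0 := Var 1.
Definition r0 := Var 2.

Inductive ICK (Gamma : form -> Prop) : form -> Prop :=
| ick_ipc : forall a, ipc_axiom a -> ICK Gamma a
| ick_gamma : forall a, Gamma a -> ICK Gamma a
| ick_C : ICK Gamma (Iff (Cond p0 (And q0 r0)) (And (Cond p0 q0) (Cond p0 r0)))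
| ick_N : ICK Gamma (Iff (Cond p0 Top) Top)
| ick_subst : forall s a, ICK Gamma a -> ICK Gamma (subst s a)
| ick_mp : forall a b, ICK Gamma (Imp a b) -> ICK Gamma a -> ICK Gamma b
| ick_congl : forall a b c, ICK Gamma (Iff a b) ->
    ICK Gamma (Iff (Cond a c) (Cond b c))
| ick_congr : forall a b c, ICK Gamma (Iff a b) ->
    ICK Gamma (Iff (Cond c a) (Cond c b)).

Inductive HLCflat_axioms : form -> Prop :=
| hlc_id : HLCflat_axioms (Cond p0 p0)
| hlc_trans : HLCflat_axioms
    (Imp (And (Cond p0 q0) (Cond q0 r0)) (Cond p0 r0)).

Definition HLCflat : form -> Prop := ICK HLCflat_axioms.

Record cframe : Type := CFrame {
  cX : Type;
  cle : cX -> cX -> Prop;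
  cR : (cX -> Prop) -> cX -> cX -> Prop   (* R_a, only meaningful for upsets a *)
}.

Definition upset (F : cframe) (a : cX F -> Prop) : Prop :=
  forall x y, cle F x y -> a x -> a y.

Definition is_cframe (F : cframe) : Prop :=
  inhabited (cX F) /\
  (forall x, cle F x x) /\
  (forall x y z, cle F x y -> cle F y z -> cle F x z) /\
  (forall a b, upset F a -> upset F b -> (forall x, a x <-> b x) ->
     forall x y, cR F a x y <-> cR F b x y) /\
  (forall a, upset F a -> forall x y z, cle F x y -> cR F a y z ->
     exists w, cR F a x w /\ cle F w z).

Definition valuation (F : cframe) := nat -> cX F -> Prop.

Fixpoint forces (F : cframe) (V : valuation F) (x : cX F) (f : form) : Prop :=
  match f with
  | Var n => V n x
  | Bot => False
  | And a b => forces V x a /\ forces V x b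
  | Or a b => forces V x a \/ forces V x b
  | Imp a b => forall y, cle F x y -> forces V y a -> forces V y b
  | Cond a b => forall y, cR F (fun z => forces V z a) x y -> forces V y b
  end.

Definition valid (F : cframe) (f : form) : Prop :=
  forall V : valuation F, (forall n, upset F (V n)) ->
  forall x, forces V x f.

Definition hlcflat_frame (F : cframe) : Prop :=
  (forall a, upset F a -> forall x y, cR F a x y -> a y) /\
  (forall a b, upset F a -> upset F b -> forall x,
     (forall y, cR F a x y -> b y) ->
     forall y, cR F a x y -> exists z, cR F b x z /\ cle F z y).

From Stdlib Require Import Classical Cantor Lia.

Set Implicit Arguments.
Unset Strict Implicit.

(* Soundness: forcing is persistent and [R_a] depends only on the extension
   of the upset [a], so every rule of ICK preserves validity; [R_a[x] ⊆ a]
   validates [p □→ p], and the second frame condition, applied with [b] the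
   extension of [q], validates transitivity.
   Completeness: in the canonical frame of prime theories ordered by inclusion,
   the successors of [x] are given by the sets [{c | a □→ c ∈ x'}] for
   extensions [x'] of [x]; both frame conditions then hold by construction,
   and [p □→ p] together with transitivity yield the truth lemma for □→. *)

Section Soundness.
Variable F : cframe.
Hypothesis F_cframe : is_cframe F.

Lemma cle_refl x : cle F x x.
Proof. destruct F_cframe as (_ & H & _); apply H. Qed.

Lemma cle_trans x y z : cle F x y -> cle F y z -> cle F x z.
Proof. destruct F_cframe as (_ & _ & H & _); apply H. Qed.

Lemma cR_ext a b : upset F a -> upset F b -> (forall x, a x <-> b x) ->
  forall x y, cR F a x y <-> cR F b x y.
Proof. destruct F_cframe as (_ & _ & _ & H & _); apply H. Qed.

Lemma cle_cR_commute a : upset F a -> forall x y z, cle F x y -> cR F a y z ->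
  exists w, cR F a x w /\ cle F w z.
Proof. destruct F_cframe as (_ & _ & _ & _ & H); apply H. Qed.

Section Valuation.
Variable V : valuation F.
Hypothesis V_upset : forall n, upset F (V n).

Lemma forces_upset f : upset F (fun x => forces V x f).
Proof.
  induction f as [n| |a IHa b IHb|a IHa b IHb|a IHa b IHb|a IHa b IHb];
    intros x y Hxy; simpl.
  - apply V_upset, Hxy.
  - tauto.
  - intros [Ha Hb]; split; [exact (IHa _ _ Hxy Ha) | exact (IHb _ _ Hxy Hb)].
  - intros [Ha|Hb]; [left; exact (IHa _ _ Hxy Ha) | right; exact (IHb _ _ Hxy Hb)].
  - intros Hab z Hyz. exact (Hab z (cle_trans Hxy Hyz)).
  - intros Hab z Hyz.
    destruct (cle_cR_commute IHa Hxy Hyz) as (w & Hxw & Hwz).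
    exact (IHb _ _ Hwz (Hab w Hxw)).
Qed.

End Valuation.

Lemma forces_subst V s f x : (forall n, upset F (V n)) ->
  forces V x (subst s f) <-> forces (fun n y => forces V y (s n)) x f.
Proof.
  intro HV. assert (HV' : forall n, upset F (fun y => forces V y (s n))).
  { intro n; apply forces_upset, HV. }
  revert x; induction f as [n| |a IHa b IHb|a IHa b IHb|a IHa b IHb|a IHa b IHb];
    intro x; simpl.
  - reflexivity.
  - reflexivity.
  - rewrite IHa, IHb; reflexivity.
  - rewrite IHa, IHb; reflexivity.
  - setoid_rewrite IHa; setoid_rewrite IHb; reflexivity.
  - assert (R_eq : forall y, cR F (fun z => forces V z (subst s a)) x y <->
        cR F (fun z => forces (fun n y => forces V y (s n)) z a) x y).
    { apply cR_ext; [apply forces_upset, HV | apply forces_upset, HV' | exact IHa]. }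
    setoid_rewrite R_eq; setoid_rewrite IHb; reflexivity.
Qed.

Lemma valid_ipc_axiom a : ipc_axiom a -> valid F a.
Proof.
  intros Ha V HV x; destruct Ha as [a b|a b c|a b|a b|a b|a b|a b|a b c|a]; simpl.
  - intros y _ Ha z Hyz _. exact (forces_upset HV Hyz Ha).
  - intros y _ Habc z Hyz Hab w Hzw Ha.
    exact (Habc w (cle_trans Hyz Hzw) Ha w (cle_refl w) (Hab w Hzw Ha)).
  - intros y _ [Ha _]; exact Ha.
  - intros y _ [_ Hb]; exact Hb.
  - intros y _ Ha z Hyz Hb. split; [exact (forces_upset HV Hyz Ha) | exact Hb].
  - intros y _ Ha; left; exact Ha.
  - intros y _ Hb; right; exact Hb.
  - intros y _ Hac z Hyz Hbc w Hzw [Ha|Hb].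
    + exact (Hac w (cle_trans Hyz Hzw) Ha).
    + exact (Hbc w Hzw Hb).
  - intros y _ [].
Qed.

Lemma valid_subst s a : valid F a -> valid F (subst s a).
Proof.
  intros Ha V HV x. apply forces_subst; [exact HV|].
  apply Ha. intro n; apply forces_upset, HV.
Qed.

Lemma valid_mp a b : valid F (Imp a b) -> valid F a -> valid F b.
Proof. intros Hab Ha V HV x. exact (Hab V HV x x (cle_refl x) (Ha V HV x)). Qed.

Lemma valid_Iff_forces a b : valid F (Iff a b) ->
  forall V, (forall n, upset F (V n)) -> forall x, forces V x a <-> forces V x b.
Proof.
  intros Hab V HV x. destruct (Hab V HV x) as [Ha Hb].
  split; [apply Ha | apply Hb]; apply cle_refl.
Qed.

Lemma valid_congl a b c : valid F (Iff a b) -> valid F (Iff (Cond a c) (Cond b c)).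
Proof.
  intros Hab V HV x.
  assert (R_eq : forall z y, cR F (fun w => forces V w a) z y <->
                             cR F (fun w => forces V w b) z y).
  { apply cR_ext; [apply forces_upset, HV | apply forces_upset, HV |].
    exact (valid_Iff_forces Hab HV). }
  simpl; split; intros y _ Hc z Hz; apply Hc, R_eq, Hz.
Qed.

Lemma valid_congr a b c : valid F (Iff a b) -> valid F (Iff (Cond c a) (Cond c b)).
Proof.
  intros Hab V HV x.
  simpl; split; intros y _ Hc z Hz; apply (valid_Iff_forces Hab HV), Hc, Hz.
Qed.

Lemma ICK_sound Gamma : (forall a, Gamma a -> valid F a) ->
  forall a, ICK Gamma a -> valid F a.
Proof.
  intros HGamma a Ha.
  induction Ha as [a Ha|a Ha| | |s a _ IH|a b _ IHab _ IHa|a b c _ IH|a b c _ IH].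
  - exact (valid_ipc_axiom Ha).
  - exact (HGamma a Ha).
  - intros V HV x; simpl; firstorder.
  - intros V HV x; simpl; firstorder.
  - exact (valid_subst s IH).
  - exact (valid_mp IHab IHa).
  - exact (valid_congl c IH).
  - exact (valid_congr c IH).
Qed.

Lemma valid_HLCflat_axiom a : hlcflat_frame F -> HLCflat_axioms a -> valid F a.
Proof.
  intros [R_incl R_trans] Ha V HV x; destruct Ha; simpl.
  - intros y Hy. exact (R_incl _ (HV 0) x y Hy).
  - intros y _ [Hpq Hqr] z Hz.
    destruct (R_trans _ _ (HV 0) (HV 1) y Hpq z Hz) as (w & Hw & Hwz).
    exact (HV 2 _ _ Hwz (Hqr w Hw)).
Qed.

End Soundness.

Section Derivations.
Variable Gamma : form -> Prop.

Inductive derives (G : form -> Prop) : form -> Prop :=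
| derives_thm a : ICK Gamma a -> derives G a
| derives_hyp a : G a -> derives G a
| derives_mp a b : derives G (Imp a b) -> derives G a -> derives G b.

Definition no_hyps : form -> Prop := fun _ => False.

Definition extend (G : form -> Prop) (a : form) : form -> Prop :=
  fun c => G c \/ c = a.

Lemma ICK_of_derives a : derives no_hyps a -> ICK Gamma a.
Proof. induction 1; [assumption | contradiction | eapply ick_mp; eassumption]. Qed.

Lemma derives_ipc G a : ipc_axiom a -> derives G a.
Proof. intro Ha; apply derives_thm, ick_ipc, Ha. Qed.

Lemma derives_mono G G' a : (forall c, G c -> G' c) -> derives G a -> derives G' a.
Proof.
  intro HG; induction 1; [apply derives_thm | apply derives_hyp, HG | eapply derives_mp];
    eassumption.
Qed.

Lemma derives_extended G a : derives (extend G a) a.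
Proof. apply derives_hyp; right; reflexivity. Qed.

Lemma derives_Imp_refl G a : derives G (Imp a a).
Proof.
  eapply derives_mp; [eapply derives_mp|];
    [apply derives_ipc, (ax_S a (Imp a a) a) | apply derives_ipc, ax_K
    | apply derives_ipc, ax_K].
Qed.

Lemma deduction G a b : derives (extend G a) b -> derives G (Imp a b).
Proof.
  induction 1 as [c Hc | c [Hc | ->] | c d _ IHcd _ IHc].
  - eapply derives_mp; [apply derives_ipc, ax_K | apply derives_thm, Hc].
  - eapply derives_mp; [apply derives_ipc, ax_K | apply derives_hyp, Hc].
  - apply derives_Imp_refl.
  - eapply derives_mp; [eapply derives_mp; [apply derives_ipc, ax_S | exact IHcd] | exact IHc].
Qed.

Lemma derives_AndI G a b : derives G a -> derives G b -> derives G (And a b).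
Proof.
  intros Ha Hb.
  eapply derives_mp; [eapply derives_mp; [apply derives_ipc, ax_andI | exact Ha] | exact Hb].
Qed.

Lemma derives_AndE1 G a b : derives G (And a b) -> derives G a.
Proof. intro Hab; eapply derives_mp; [apply derives_ipc, ax_andE1 | exact Hab]. Qed.

Lemma derives_AndE2 G a b : derives G (And a b) -> derives G b.
Proof. intro Hab; eapply derives_mp; [apply derives_ipc, ax_andE2 | exact Hab]. Qed.

Definition subst3 (a b c : form) (n : nat) : form :=
  match n with 0 => a | 1 => b | 2 => c | _ => Var n end.

Lemma ICK_Cond_And a b c : ICK Gamma (Iff (Cond a (And b c)) (And (Cond a b) (Cond a c))).
Proof. exact (ick_subst (subst3 a b c) (ick_C Gamma)). Qed.

Lemma ICK_Cond_Top a : ICK Gamma (Iff (Cond a Top) Top).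
Proof. exact (ick_subst (subst3 a a a) (ick_N Gamma)). Qed.

Lemma ICK_Cond_nec a c : ICK Gamma c -> ICK Gamma (Cond a c).
Proof.
  intro Hc.
  assert (E : ICK Gamma (Iff (Cond a c) (Cond a Top))).
  { apply ick_congr, ICK_of_derives, derives_AndI; apply deduction.
    - apply derives_Imp_refl.
    - apply derives_thm, Hc. }
  apply ICK_of_derives.
  eapply derives_mp; [eapply derives_AndE2, derives_thm, E |].
  eapply derives_mp; [eapply derives_AndE2, derives_thm, ICK_Cond_Top |].
  apply derives_Imp_refl.
Qed.

Lemma ICK_Cond_mono a b c : ICK Gamma (Imp b c) -> ICK Gamma (Imp (Cond a b) (Cond a c)).
Proof.
  intro Hbc.
  assert (E : ICK Gamma (Iff (Cond a b) (Cond a (And b c)))).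
  { apply ick_congr, ICK_of_derives, derives_AndI; apply deduction.
    - apply derives_AndI; [apply derives_extended |].
      eapply derives_mp; [apply derives_thm, Hbc | apply derives_extended].
    - eapply derives_AndE1, derives_extended. }
  apply ICK_of_derives, deduction.
  eapply derives_AndE2, derives_mp; [eapply derives_AndE1, derives_thm, ICK_Cond_And |].
  eapply derives_mp; [eapply derives_AndE1, derives_thm, E | apply derives_extended].
Qed.

Lemma ICK_Cond_mp a c d :
  ICK Gamma (Imp (And (Cond a (Imp c d)) (Cond a c)) (Cond a d)).
Proof.
  apply ICK_of_derives, deduction.
  eapply derives_mp.
  - apply derives_thm, (@ICK_Cond_mono a (And (Imp c d) c)), ICK_of_derives, deduction.
    eapply derives_mp; [eapply derives_AndE1 | eapply derives_AndE2];
      apply derives_extended.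
  - eapply derives_mp; [eapply derives_AndE2, derives_thm, ICK_Cond_And |].
    apply derives_extended.
Qed.

Lemma derives_Cond_closed G a c :
  derives (fun d => derives G (Cond a d)) c -> derives G (Cond a c).
Proof.
  induction 1 as [c Hc | c Hc | c d _ IHcd _ IHc].
  - apply derives_thm, ICK_Cond_nec, Hc.
  - exact Hc.
  - eapply derives_mp; [apply derives_thm, ICK_Cond_mp | exact (derives_AndI IHcd IHc)].
Qed.

End Derivations.

Fixpoint encode (f : form) : nat :=
  match f with
  | Var n => to_nat (0, n)
  | Bot => to_nat (1, 0)
  | And a b => to_nat (2, to_nat (encode a, encode b))
  | Or a b => to_nat (3, to_nat (encode a, encode b))
  | Imp a b => to_nat (4, to_nat (encode a, encode b))
  | Cond a b => to_nat (5, to_nat (encode a, encode b))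
  end.

(* [decode k] inverts [encode] on formulas of depth at most the fuel [k]. *)
Fixpoint decode (k n : nat) : form :=
  match k with
  | 0 => Bot
  | S k =>
    let (t, m) := of_nat n in
    let (i, j) := of_nat m in
    match t with
    | 0 => Var m
    | 1 => Bot
    | 2 => And (decode k i) (decode k j)
    | 3 => Or (decode k i) (decode k j)
    | 4 => Imp (decode k i) (decode k j)
    | _ => Cond (decode k i) (decode k j)
    end
  end.

Fixpoint depth (f : form) : nat :=
  match f with
  | And a b | Or a b | Imp a b | Cond a b => S (max (depth a) (depth b))
  | _ => 1
  end.

Lemma decode_encode f k : depth f <= k -> decode k (encode f) = f.
Proof.
  revert k; induction f; intros k Hk; destruct k as [|k]; simpl in Hk; try lia;
    cbn [decode encode]; rewrite ?cancel_of_to; try reflexivity.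
  1: destruct (of_nat n); reflexivity.
  all: rewrite IHf1, IHf2 by lia; reflexivity.
Qed.

Definition form_enum (n : nat) : form := let (k, m) := of_nat n in decode k m.

Lemma form_enum_surj f : exists n, form_enum n = f.
Proof.
  exists (to_nat (depth f, encode f)). unfold form_enum.
  rewrite cancel_of_to. apply decode_encode; reflexivity.
Qed.

Section PrimeTheories.
Variable Gamma : form -> Prop.

Section Lindenbaum.
Variables (G : form -> Prop) (psi : form).
Hypothesis G_psi : ~ derives Gamma G psi.

Fixpoint lind_chain (n : nat) : form -> Prop :=
  match n with
  | 0 => G
  | S n => fun c => lind_chain n c \/
      (c = form_enum n /\ ~ derives Gamma (extend (lind_chain n) (form_enum n)) psi)
  end.

Definition lind_limit (c : form) : Prop := exists n, lind_chain n c.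

Lemma lind_chain_mono n m : n <= m -> forall c, lind_chain n c -> lind_chain m c.
Proof. induction 1; simpl; auto. Qed.

Lemma lind_chain_underivable n : ~ derives Gamma (lind_chain n) psi.
Proof.
  induction n as [|n IHn]; [exact G_psi|]; simpl.
  destruct (classic (derives Gamma (extend (lind_chain n) (form_enum n)) psi))
    as [D|D]; intro H.
  - apply IHn; revert H; apply derives_mono; intros c [Hc|[_ Hc]]; tauto.
  - apply D; revert H; apply derives_mono; intros c [Hc|[-> _]]; [left | right]; auto.
Qed.

Lemma lind_limit_compact a : derives Gamma lind_limit a ->
  exists n, derives Gamma (lind_chain n) a.
Proof.
  induction 1 as [a Ha | a [n Hn] | a b _ [n1 H1] _ [n2 H2]].
  - exists 0; apply derives_thm, Ha.
  - exists n; apply derives_hyp, Hn.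
  - exists (max n1 n2).
    eapply derives_mp; eapply derives_mono; try eassumption; apply lind_chain_mono; lia.
Qed.

Lemma lind_limit_underivable : ~ derives Gamma lind_limit psi.
Proof.
  intro H; destruct (lind_limit_compact H) as [n Hn]; exact (lind_chain_underivable Hn).
Qed.

Lemma lind_limit_maximal a : ~ lind_limit a -> derives Gamma lind_limit (Imp a psi).
Proof.
  intro Ha. destruct (form_enum_surj a) as [n <-].
  apply deduction, NNPP; intro D. apply Ha. exists (S n); right; split; [reflexivity|].
  intro D'; apply D; revert D'; apply derives_mono.
  intros c [Hc|Hc]; [left; exists n; exact Hc | right; exact Hc].
Qed.

Lemma lind_limit_closed a : derives Gamma lind_limit a -> lind_limit a.
Proof.
  intro H; apply NNPP; intro Ha. apply lind_limit_underivable.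
  exact (derives_mp (lind_limit_maximal Ha) H).
Qed.

Lemma lind_limit_prime a b : lind_limit (Or a b) -> lind_limit a \/ lind_limit b.
Proof.
  intro H; apply NNPP; intro Hab. apply lind_limit_underivable.
  eapply derives_mp; [eapply derives_mp; [eapply derives_mp|] |].
  - apply derives_ipc, (ax_orE a b psi).
  - apply lind_limit_maximal; tauto.
  - apply lind_limit_maximal; tauto.
  - apply derives_hyp, H.
Qed.

Lemma lind_limit_consistent : ~ lind_limit Bot.
Proof.
  intro H; apply lind_limit_underivable.
  eapply derives_mp; [apply derives_ipc, ax_efq | apply derives_hyp, H].
Qed.

End Lindenbaum.

Record prime_theory : Type := PrimeTheory {
  th : form -> Prop;
  th_closed : forall a, derives Gamma th a -> th a;
  th_consistent : ~ th Bot;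
  th_prime : forall a b, th (Or a b) -> th a \/ th b }.

Definition th_le (x y : prime_theory) : Prop := forall a, th x a -> th y a.

Lemma lindenbaum G psi : ~ derives Gamma G psi ->
  exists x : prime_theory, (forall a, G a -> th x a) /\ ~ th x psi.
Proof.
  intro G_psi.
  exists (PrimeTheory (lind_limit_closed G_psi) (lind_limit_consistent G_psi)
                      (lind_limit_prime G_psi)); simpl.
  split.
  - intros a Ha; exists 0; exact Ha.
  - intro H; exact (lind_limit_underivable G_psi (derives_hyp _ H)).
Qed.

Lemma th_ICK (x : prime_theory) a : ICK Gamma a -> th x a.
Proof. intro Ha; apply th_closed, derives_thm, Ha. Qed.

Lemma th_mp (x : prime_theory) a b : th x (Imp a b) -> th x a -> th x b.
Proof. intros Hab Ha; apply th_closed; eapply derives_mp; apply derives_hyp; eassumption. Qed.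

Lemma th_And (x : prime_theory) a b : th x (And a b) <-> th x a /\ th x b.
Proof.
  split.
  - intro Hab; split; apply th_closed;
      [eapply derives_AndE1 | eapply derives_AndE2]; apply derives_hyp, Hab.
  - intros [Ha Hb]; apply th_closed, derives_AndI; apply derives_hyp; assumption.
Qed.

Lemma th_Or (x : prime_theory) a b : th x (Or a b) <-> th x a \/ th x b.
Proof.
  split; [apply th_prime|].
  intros [Ha|Hb]; eapply th_mp; try eassumption; apply th_ICK, ick_ipc; constructor.
Qed.

Lemma th_Imp (x : prime_theory) a b :
  th x (Imp a b) <-> forall y, th_le x y -> th y a -> th y b.
Proof.
  split.
  - intros Hab y Hxy Ha; exact (th_mp (Hxy _ Hab) Ha).
  - intro H; apply NNPP; intro Hab.
    destruct (@lindenbaum (extend (th x) a) b) as (y & Hy & Hb).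
    { intro D; apply Hab, th_closed, deduction, D. }
    apply Hb, H.
    + intros c Hc; apply Hy; left; exact Hc.
    + apply Hy; right; reflexivity.
Qed.

Lemma th_Cond (x : prime_theory) a c :
  th x (Cond a c) <->
  forall z : prime_theory, (forall d, th x (Cond a d) -> th z d) -> th z c.
Proof.
  split.
  - intros Hc z Hz; exact (Hz c Hc).
  - intro H; apply NNPP; intro Hc.
    destruct (@lindenbaum (fun d => th x (Cond a d)) c) as (z & Hz & Hzc).
    { intro D; apply Hc, th_closed, derives_Cond_closed.
      revert D; apply derives_mono; intros d Hd; apply derives_hyp, Hd. }
    exact (Hzc (H z Hz)).
Qed.

End PrimeTheories.

Lemma HLCflat_Cond_refl a : HLCflat (Cond a a).
Proof. exact (ick_subst (subst3 a a a) (ick_gamma _ _ hlc_id)). Qed.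

Lemma HLCflat_Cond_trans a b c : HLCflat (Imp (And (Cond a b) (Cond b c)) (Cond a c)).
Proof. exact (ick_subst (subst3 a b c) (ick_gamma _ _ hlc_trans)). Qed.

Definition world : Type := prime_theory HLCflat_axioms.

(* The truth lemma only needs [x' = x]; quantifying over extensions [x'] of
   [x] makes [(≤ ∘ R_B) ⊆ (R_B ∘ ≤)] immediate. *)
Definition canon_R (B : world -> Prop) (x y : world) : Prop :=
  exists a (x' : world), th_le x x' /\
    (forall z : world, (forall c, th x' (Cond a c) -> th z c) -> B z) /\
    (forall c, th x' (Cond a c) -> th y c).

Definition canon : cframe := CFrame (@th_le HLCflat_axioms) canon_R.

Definition canon_val : valuation canon := fun n x => th x (Var n).

Lemma canon_R_mono (A B : world -> Prop) x y :
  (forall z, A z -> B z) -> canon_R A x y -> canon_R B x y.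
Proof.
  intros AB (a & x' & Hxx' & HA & Hy).
  exists a, x'; repeat split; [exact Hxx' | | exact Hy].
  intros z Hz; apply AB, HA, Hz.
Qed.

Lemma canon_is_cframe : inhabited world -> is_cframe canon.
Proof.
  intro w; split; [exact w|]. simpl.
  split; [intros x c Hc; exact Hc|].
  split; [intros x y z Hxy Hyz c Hc; exact (Hyz c (Hxy c Hc))|].
  split.
  - intros A B _ _ AB x y; split; apply canon_R_mono; apply AB.
  - intros A _ x y z Hxy (a & y' & Hyy' & HA & Hz).
    exists z; split; [|intros c Hc; exact Hc].
    exists a, y'; repeat split; [| exact HA | exact Hz].
    intros c Hc; exact (Hyy' c (Hxy c Hc)).
Qed.

Lemma canon_hlcflat : hlcflat_frame canon.
Proof.
  split.
  - intros A _ x y (a & x' & _ & HA & Hy); exact (HA y Hy).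
  - intros A B _ _ x AB y (a & x' & Hxx' & HA & Hy).
    exists y; split; [|intros c Hc; exact Hc].
    exists a, x'; repeat split; [exact Hxx' | | exact Hy].
    intros z Hz; apply AB; exists a, x'; repeat split; assumption.
Qed.

Lemma canon_R_Cond (x : world) a b :
  (forall y, canon_R (fun z => th z a) x y -> th y b) <-> th x (Cond a b).
Proof.
  split.
  - intro H; apply th_Cond; intros z Hz; apply H.
    exists a, x; repeat split; [intros c Hc; exact Hc | | exact Hz].
    intros z' Hz'; apply Hz', th_ICK, HLCflat_Cond_refl.
  - intros Hab y (c & x' & Hxx' & Ha & Hy); apply Hy.
    assert (Hca : th x' (Cond c a)) by (apply th_Cond; exact Ha).
    eapply th_mp; [apply th_ICK, (HLCflat_Cond_trans c a b) |].
    apply th_And; split; [exact Hca | exact (Hxx' _ Hab)].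
Qed.

Lemma canon_truth f (x : world) : @forces canon canon_val x f <-> th x f.
Proof.
  revert x; induction f as [n| |a IHa b IHb|a IHa b IHb|a IHa b IHb|a IHa b IHb];
    intro x; simpl.
  - reflexivity.
  - split; [tauto | apply th_consistent].
  - rewrite IHa, IHb, th_And; reflexivity.
  - rewrite IHa, IHb, th_Or; reflexivity.
  - rewrite th_Imp; setoid_rewrite IHa; setoid_rewrite IHb; reflexivity.
  - rewrite <- canon_R_Cond; setoid_rewrite IHb.
    split; intros H y Hy; apply H; revert Hy; apply canon_R_mono; apply IHa.
Qed.

Lemma HLCflat_complete f :
  (forall F : cframe, is_cframe F -> hlcflat_frame F -> valid F f) -> HLCflat f.
Proof.
  intro Hvalid; apply NNPP; intro Hf.
  destruct (@lindenbaum HLCflat_axioms no_hyps f) as (w & _ & Hw).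
  { intro D; apply Hf, ICK_of_derives, D. }
  apply Hw, canon_truth, Hvalid.
  - exact (canon_is_cframe (inhabits w)).
  - exact canon_hlcflat.
  - intros n x y Hxy Hx; exact (Hxy _ Hx).
Qed.

Theorem theorem5p10 : forall f : form,
  HLCflat f <->
  (forall F : cframe, is_cframe F -> hlcflat_frame F -> valid F f).
Proof.
  intro f; split.
  - intros Hf F HF HH. exact (ICK_sound HF (fun a => valid_HLCflat_axiom HH) Hf).
  - apply HLCflat_complete.
Qed.
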